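(* Let $(M,d,\mu)$ be a quasi-$b$-geodesic metric measure space with $\mu$ satisfying $(VD)_{\mathrm{loc}}$ and $(VD)_\infty$. Then there exist $c,\gamma>0$ such that $$\frac{V(x,r)}{V(x,s)}\ge c\left(\frac rs\right)^\gamma$$ for all $x\in M$ and all $b\le s\le r\le\operatorname{diam}(M)$, where $\operatorname{diam}(M)=\sup\{d(x,y):x,y\in M\}$.
   Context: Metric measure space: locally compact metric space with a Radon measure $\mu$ of full support; $B(x,r)=\{y:d(x,y)\le r\}$, $V(x,r)=\mu(B(x,r))$. Quasi-$b$-geodesic: there is $C$ with $d_b\le Cd$, where $d_b(x,y)=\inf\sum_i d(x_i,x_{i+1})$ over sequences $x=x_0,\dots,x_m=y$ with $d(x_i,x_{i+1})\le b$. $(VD)_{\mathrm{loc}}$: for each $r>0$ there is $C_r$ with $V(x,2r)\le C_rV(x,r)$ for all $x$. $(VD)_\infty$: there are $r_0,C>0$ with $V(x,2r)\le CV(x,r)$ for all $x$, $r\ge r_0$. *)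

From HB Require Import structures.
From mathcomp Require Import all_boot all_order all_algebra.
From mathcomp Require Import all_classical all_reals all_analysis.
Set Implicit Arguments. Unset Strict Implicit. Unset Printing Implicit Defensive.
Import Order.TTheory GRing.Theory Num.Theory.
Local Open Scope classical_set_scope.
Local Open Scope ring_scope.

Section MMS.
Context {T : Type} {R : realType} (dist : T -> T -> R).

Definition is_metric : Prop :=
  [/\ (forall x y, 0 <= dist x y),
      (forall x y, dist x y = 0 <-> x = y),
      (forall x y, dist x y = dist y x) &
      (forall x y z, dist x z <= dist x y + dist y z)].

Definition cball (x : T) (r : R) : set T := [set y | dist x y <= r].
Definition oball (x : T) (r : R) : set T := [set y | dist x y < r].

Definition open_d (A : set T) : Prop :=
  forall x, A x -> exists2 e : R, 0 < e & oball x e `<=` A.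

Definition compact_d (K : set T) : Prop :=
  forall (I : Type) (U : I -> set T), (forall i, open_d (U i)) ->
    K `<=` \bigcup_i U i ->
    exists2 F : set I, finite_set F & K `<=` \bigcup_(i in F) U i.

Definition locally_compact_d : Prop :=
  forall x, exists2 K, compact_d K & exists2 e : R, 0 < e & oball x e `<=` K.

Definition diam : \bar R :=
  ereal_sup [set (dist x y)%:E | x in [set: T] & y in [set: T]].

(* b-chains from x to y: x = x_0, x_1, ..., x_m = y with d(x_i,x_{i+1}) <= b,
   represented by the list [x_1; ...; x_m] *)
Definition bchain (b : R) (x y : T) (s : seq T) : Prop :=
  path (fun u v => dist u v <= b) x s /\ last x s = y.

Definition chain_length (x : T) (s : seq T) : R :=
  \sum_(p <- zip (x :: s) s) dist p.1 p.2.

Definition d_b (b : R) (x y : T) : \bar R :=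
  ereal_inf [set (chain_length x s)%:E | s in [set s | bchain b x y s]].

Definition quasi_b_geodesic (b : R) : Prop :=
  exists C : R, forall x y, (d_b b x y <= (C * dist x y)%:E)%E.

End MMS.

Section Measure.
Context {d : measure_display} {T : measurableType d} {R : realType}
  (dist : T -> T -> R) (mu : set T -> \bar R).

Definition borel_structure : Prop :=
  forall A : set T, measurable A <-> <<s [set U | open_d dist U] >> A.

Definition radon : Prop :=
  [/\ (forall K, compact_d dist K -> (mu K < +oo)%E),
      (forall A, measurable A ->
         mu A = ereal_inf [set mu U | U in [set U | open_d dist U /\ A `<=` U]]) &
      (forall U, open_d dist U ->
         mu U = ereal_sup [set mu K | K in [set K | compact_d dist K /\ K `<=` U]])].

Definition full_support : Prop :=
  forall U, open_d dist U -> U !=set0 -> (0 < mu U)%E.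

Definition V (x : T) (r : R) : \bar R := mu (cball dist x r).

Definition VD_loc : Prop :=
  forall r : R, 0 < r -> exists C : R, forall x, (V x (2 * r) <= C%:E * V x r)%E.

Definition VD_infty : Prop :=
  exists r0 : R, exists C : R, [/\ 0 < r0, 0 < C &
    forall x r, r0 <= r -> (V x (2 * r) <= C%:E * V x r)%E].

End Measure.

From HB Require Import structures.
From mathcomp Require Import all_boot all_order all_algebra.
From mathcomp Require Import all_classical all_reals all_analysis.
From mathcomp Require Import ring lra.
Import Order.TTheory GRing.Theory Num.Theory.
Local Open Scope classical_set_scope.
Local Open Scope ring_scope.

(* Uniform doubling at all scales >= b follows from (VD)_loc at the finitely
   many dyadic scales below the threshold of (VD)_infty.  If 24 b <= r <= diam M,
   a b-chain from x to a point at distance > r/3 passes through some z with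
   r/6 <= d(x,z) <= r/3; then B(x,r/24) and B(z,r/12) are disjoint subsets of
   B(x,r), and B(x,r/24) lies in B(z, 2^3 r/12), so with D the doubling
   constant at scales >= b we get V(x,r) >= (1 + D^-3) V(x,r/24).  Iterating this reverse doubling yields the
   power law with gamma = log_24 (1 + D^-3). *)

Lemma exists_expr_gt (R : realType) (c x : R) :
  2 <= c -> 0 <= x -> exists n : nat, x < c ^+ n.
Proof.
move=> c_ge2 x_ge0; exists (Num.Def.archi_bound x).
apply: (lt_le_trans (archi_boundP x_ge0)).
apply: (@le_trans _ _ (2 ^+ Num.Def.archi_bound x)); last first.
  by apply: lerXn2r; rewrite ?nnegrE //; apply: le_trans c_ge2.
by rewrite -natrX ler_nat ltnW // ltn_expl.
Qed.

Section ReverseDoublingIteration.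
Context {R : realType} (f : R -> \bar R) (L : \bar R) (b l q : R).
Hypothesis f_ge0 : forall r, (0 <= f r)%E.
Hypothesis f_mono : forall r r', r <= r' -> (f r <= f r')%E.
Hypothesis f_step :
  forall r, l * b <= r -> (r%:E <= L)%E -> (q%:E * f (r / l) <= f r)%E.

Local Notation gamma := (ln q / ln l).

Lemma gamma_gt0 : 2 <= l -> 1 < q -> 0 < gamma.
Proof. by move=> l_ge2 q_gt1; apply: divr_gt0; apply: ln_gt0; lra. Qed.

Lemma powR_gamma : 2 <= l -> 1 < q -> l `^ gamma = q.
Proof.
move=> l_ge2 q_gt1.
rewrite /powR ifF; last by apply/negbTE; rewrite gt_eqF //; lra.
have lnl_gt0 : 0 < ln l by apply: ln_gt0; lra.
by rewrite mulrAC -mulrA mulfV ?gt_eqF // mulr1 lnK // posrE; lra.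
Qed.

Lemma reverse_doubling_iter m s r : 0 < b -> 2 <= l -> 1 < q ->
  b <= s -> s <= r -> (r%:E <= L)%E -> r < l ^+ m * s ->
  (((r / s) `^ gamma)%:E * f s <= q%:E * f r)%E.
Proof.
move=> b_gt0 l_ge2 q_gt1.
have gamma_ge0 := ltW (gamma_gt0 l_ge2 q_gt1).
have powR_gamma := powR_gamma l_ge2 q_gt1.
set g := gamma in gamma_ge0 powR_gamma *.
elim: m s r => [|m IH] s r b_le_s s_le_r r_le_L r_lt.
  by exfalso; rewrite expr0 mul1r in r_lt; lra.
have s_gt0 : 0 < s by lra.
have [r_small|r_large] := ltP r (l * s).
  apply: (@le_trans _ _ (q%:E * f s)%E).
    apply: lee_wpmul2r => //; rewrite lee_fin -powR_gamma.
    apply: (ge0_ler_powR gamma_ge0); rewrite ?nnegrE ?divr_ge0 //; try lra.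
    by rewrite ler_pdivrMr //; lra.
  by apply: lee_wpmul2l; [rewrite lee_fin; lra | exact: f_mono].
have l_gt0 : 0 < l by lra.
have rl_ge_s : s <= r / l by rewrite ler_pdivlMr // mulrC.
have rl_le_L : ((r / l)%:E <= L)%E.
  apply: le_trans r_le_L; rewrite lee_fin ler_pdivrMr //.
  by rewrite ler_peMr; lra.
have rl_lt : r / l < l ^+ m * s.
  by rewrite ltr_pdivrMr // mulrAC -exprSr.
have -> : (r / s) `^ g = q * (r / l / s) `^ g.
  rewrite -powR_gamma -powRM ?divr_ge0 //; try lra.
  by congr (_ `^ _); field; rewrite !gt_eqF.
rewrite EFinM -muleA.
apply: (@le_trans _ _ (q%:E * (q%:E * f (r / l)))%E).
  by apply: lee_wpmul2l; [rewrite lee_fin; lra | exact: IH].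
apply: lee_wpmul2l; first by rewrite lee_fin; lra.
by apply: f_step => //; apply: le_trans r_large; rewrite ler_wpM2l; lra.
Qed.

Lemma reverse_doubling s r : 0 < b -> 2 <= l -> 1 < q ->
  b <= s -> s <= r -> (r%:E <= L)%E -> ((q^-1 * (r / s) `^ gamma)%:E * f s <= f r)%E.
Proof.
move=> b_gt0 l_ge2 q_gt1 b_le_s s_le_r r_le_L.
have s_gt0 : 0 < s by lra.
have [m r_lt] : exists m, r / s < l ^+ m.
  by apply: exists_expr_gt; rewrite ?divr_ge0 //; lra.
rewrite ltr_pdivrMr // in r_lt.
rewrite EFinM -muleA.
apply: (@le_trans _ _ (q^-1%:E * (q%:E * f r))%E).
  apply: lee_wpmul2l; first by rewrite lee_fin invr_ge0; lra.
  exact: (reverse_doubling_iter m).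
by rewrite muleA -EFinM mulVf ?gt_eqF ?mul1e //; lra.
Qed.

End ReverseDoublingIteration.

Section MetricChains.
Context {T : Type} {R : realType} {dist : T -> T -> R}.
Hypothesis dist_metric : is_metric dist.

Lemma dist_triangle x y z : dist x z <= dist x y + dist y z.
Proof. by case: dist_metric. Qed.

Lemma distC x y : dist x y = dist y x.
Proof. by case: dist_metric. Qed.

Lemma dist_xx x : dist x x = 0.
Proof. by case: dist_metric => _ dist0 _ _; apply/dist0. Qed.

Lemma path_meets_annulus {b} (lo hi : R) x s u : lo + b <= hi -> dist x u < lo ->
  path (fun u v => dist u v <= b) u s -> lo <= dist x (last u s) ->
  exists z, lo <= dist x z <= hi.
Proof.
move=> width; elim: s u => [|v s IH] u xu_lt /=; first lra.
move=> /andP[uv_le path_vs] last_ge.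
have [xv_lt|xv_ge] := ltP (dist x v) lo; first exact: (IH v).
by exists v; rewrite xv_ge /=; have := dist_triangle x u v; lra.
Qed.

Lemma exists_far_point x (a : R) : ((2 * a)%:E < diam dist)%E ->
  exists y, a < dist x y.
Proof.
move/ereal_sup_gt => [_ [y1 _ [y2 _ <-]]]; rewrite lte_fin => y1y2_gt.
have := dist_triangle y1 x y2; rewrite (distC y1 x) => tri.
have [|xy1_le] := ltP a (dist x y1); first by exists y1.
by exists y2; lra.
Qed.

Lemma quasi_b_geodesic_bchain {b : R} x y :
  quasi_b_geodesic dist b -> exists s, bchain dist b x y s.
Proof.
move=> [C db_le]; apply: contrapT => no_chain.
have no_length :
    [set (chain_length dist x s)%:E | s in [set s | bchain dist b x y s]] = set0.
  by apply/seteqP; split => // e [s chain_s _]; apply: no_chain; exists s.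
by have := db_le x y; rewrite /d_b no_length ereal_inf0 leye_eq.
Qed.

Lemma exists_annulus_point (b r : R) x : 0 < b -> quasi_b_geodesic dist b ->
  6 * b <= r -> (r%:E <= diam dist)%E -> exists z, r / 6 <= dist x z <= r / 3.
Proof.
move=> b_gt0 geod r_ge r_le_diam.
have [y xy_gt] : exists y, r / 3 < dist x y.
  apply: exists_far_point; apply: lt_le_trans r_le_diam.
  by rewrite lte_fin; lra.
have [s [path_s last_s]] := quasi_b_geodesic_bchain x y geod.
apply: (path_meets_annulus (r / 6) (r / 3) x s x _ _ path_s);
  rewrite ?last_s ?dist_xx; lra.
Qed.

End MetricChains.

Section VolumeGrowth.
Context {d : measure_display} {T : measurableType d} {R : realType}
  {dist : T -> T -> R} (mu : {measure set T -> \bar R}).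
Hypothesis dist_metric : is_metric dist.
Hypothesis dist_borel : borel_structure dist.

Local Notation V := (V dist mu).

Lemma measurable_cball x r : measurable (cball dist x r).
Proof.
have -> : cball dist x r = ~` [set y | r < dist x y].
  by apply/seteqP; split => y; rewrite /cball /= leNgt => /negP.
apply: measurableC; apply/dist_borel; apply: sub_sigma_algebra => y /= xy_gt.
exists (dist x y - r); first by rewrite subr_gt0.
move=> w; rewrite /oball /= => yw_lt; have := dist_triangle dist_metric x w y.
rewrite (distC dist_metric w y); lra.
Qed.

Lemma V_ge0 x r : (0 <= V x r)%E.
Proof. exact: measure_ge0. Qed.

Lemma le_V x r r' : r <= r' -> (V x r <= V x r')%E.
Proof.
move=> r_le; apply: le_measure; rewrite ?inE; try exact: measurable_cball.
by move=> y /= xy_le; apply: le_trans r_le.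
Qed.

Section Doubling.
Context {b : R}.

Lemma VD_loc_expr : 0 < b -> VD_loc dist mu -> forall n,
  exists D : R, 0 < D /\ forall x, (V x (2 ^+ n * b) <= D%:E * V x b)%E.
Proof.
move=> b_gt0 loc; elim => [|n [D [D_gt0 doubling_n]]].
  by exists 1; split => // x; rewrite expr0 mul1r mul1e.
have [C doubling] :=
  loc (2 ^+ n * b) (mulr_gt0 (exprn_gt0 _ (ltr0Sn _ 1)) b_gt0).
exists (Num.max C 1 * D); split => [|x].
  by apply: mulr_gt0 => //; rewrite lt_max ltr01 orbT.
rewrite exprS -mulrA; apply: (le_trans (doubling x)).
apply: (@le_trans _ _ ((Num.max C 1)%:E * V x (2 ^+ n * b))%E).
  by apply: lee_wpmul2r; [exact: V_ge0 | rewrite lee_fin le_max lexx].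
rewrite EFinM -muleA; apply: lee_wpmul2l; last exact: doubling_n.
by rewrite lee_fin le_max ler01 orbT.
Qed.

Lemma VD_above : 0 < b -> VD_loc dist mu -> VD_infty dist mu ->
  exists D : R, 0 < D /\ forall x r, b <= r -> (V x (2 * r) <= D%:E * V x r)%E.
Proof.
move=> b_gt0 loc [r0 [C0 [r0_gt0 C0_gt0 doubling_large]]].
have [k r0_lt] : exists k, 2 * r0 / b < 2 ^+ k.
  by apply: exists_expr_gt => //; apply: divr_ge0; lra.
rewrite ltr_pdivrMr // in r0_lt.
have [Dk [Dk_gt0 doubling_k]] := VD_loc_expr b_gt0 loc k.
exists (C0 + Dk); split => [|x r b_le_r]; first exact: addr_gt0.
have [r0_le_r|r_lt_r0] := leP r0 r.
  apply: (le_trans (doubling_large x r r0_le_r)); apply: lee_wpmul2r.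
    exact: V_ge0.
  by rewrite lee_fin lerDl ltW.
apply: (@le_trans _ _ (V x (2 ^+ k * b))); first by apply: le_V; lra.
apply: (le_trans (doubling_k x)); apply: (@le_trans _ _ (Dk%:E * V x r)%E).
  by apply: lee_wpmul2l; [rewrite lee_fin ltW | exact: le_V].
by apply: lee_wpmul2r; [exact: V_ge0 | rewrite lee_fin lerDr ltW].
Qed.

Context {D : R}.
Hypothesis D_gt0 : 0 < D.
Hypothesis doubling : forall x r, b <= r -> (V x (2 * r) <= D%:E * V x r)%E.

Lemma V_expr_le x r n : 0 < b -> b <= r ->
  (V x (2 ^+ n * r) <= (D ^+ n)%:E * V x r)%E.
Proof.
move=> b_gt0 b_le_r.
have b_le k : b <= 2 ^+ k * r.
  have r_ge0 : 0 <= r by lra.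
  by apply: le_trans b_le_r _; rewrite ler_peMl ?exprn_ege1 ?ler1n.
elim: n => [|n IH]; first by rewrite !expr0 mul1r mul1e.
rewrite exprS -mulrA; apply: (le_trans (doubling _ _ (b_le n))).
rewrite exprS EFinM -muleA; apply: lee_wpmul2l => //.
by rewrite lee_fin ltW.
Qed.

Lemma V_reverse_doubling x r : 0 < b -> quasi_b_geodesic dist b ->
  24 * b <= r -> (r%:E <= diam dist)%E ->
  ((1 + (D ^+ 3)^-1)%:E * V x (r / 24) <= V x r)%E.
Proof.
move=> b_gt0 geod r_ge r_le_diam.
have [z /andP[xz_ge xz_le]] : exists z, r / 6 <= dist x z <= r / 3.
  by apply: (exists_annulus_point dist_metric b r x b_gt0 geod) => //; lra.
have tri := dist_triangle dist_metric.
set A := cball dist x (r / 24); set B := cball dist z (r / 12).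
have disjAB : A `&` B = set0.
  apply/seteqP; split => // w [xw_le zw_le].
  rewrite /A /B /cball /= in xw_le zw_le.
  by have := tri x w z; rewrite (distC dist_metric w z); lra.
have AB_sub : A `|` B `<=` cball dist x r.
  move=> w [xw_le|zw_le]; rewrite /cball /=.
    by rewrite /A /cball /= in xw_le; lra.
  by rewrite /B /cball /= in zw_le; have := tri x z w; lra.
have VA_le : (V x (r / 24) <= (D ^+ 3)%:E * V z (r / 12))%E.
  apply: (le_trans _ (V_expr_le z (r / 12) 3 b_gt0 _)); last lra.
  apply: le_measure; rewrite ?inE; try exact: measurable_cball.
  move=> w; rewrite /cball /= => xw_le.
  by have := tri z x w; rewrite (distC dist_metric z x); lra.
have D3_gt0 : 0 < D ^+ 3 by exact: exprn_gt0.
have VB_ge : ((D ^+ 3)^-1%:E * V x (r / 24) <= V z (r / 12))%E.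
  apply: (@le_trans _ _ ((D ^+ 3)^-1%:E * ((D ^+ 3)%:E * V z (r / 12)))%E).
    by apply: lee_wpmul2l => //; rewrite lee_fin invr_ge0 ltW.
  by rewrite muleA -EFinM mulVf ?gt_eqF // mul1e.
apply: (@le_trans _ _ (mu (A `|` B))); last first.
  apply: le_measure; rewrite ?inE //; last exact: measurable_cball.
  by apply: measurableU; exact: measurable_cball.
rewrite measureU //; try exact: measurable_cball.
rewrite EFinD ge0_muleDl ?lee_fin ?invr_ge0 ?(ltW D3_gt0) // mul1e.
exact: leeD2l.
Qed.

End Doubling.

End VolumeGrowth.

Theorem lemma2p12 (d : measure_display) (T : measurableType d) (R : realType)
  (dist : T -> T -> R) (mu : {measure set T -> \bar R}) (b : R) :
  is_metric dist -> locally_compact_d dist -> borel_structure dist ->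
  radon dist mu -> full_support dist mu ->
  0 < b -> quasi_b_geodesic dist b ->
  VD_loc dist mu -> VD_infty dist mu ->
  exists c : R, exists gamma : R, [/\ 0 < c, 0 < gamma &
    forall (x : T) (s r : R), b <= s -> s <= r -> (r%:E <= diam dist)%E ->
      ((c * (r / s) `^ gamma)%:E * V dist mu x s <= V dist mu x r)%E].
Proof.
move=> metric _ borel _ _ b_gt0 geod loc infty.
have [D [D_gt0 doubling]] := VD_above mu metric borel b_gt0 loc infty.
set q := 1 + (D ^+ 3)^-1.
have q_gt1 : 1 < q by rewrite /q ltrDl invr_gt0 exprn_gt0.
have l_ge2 : (2 : R) <= 24 by lra.
exists q^-1, (ln q / ln 24); split.
- by rewrite invr_gt0; lra.
- exact: gamma_gt0.
- move=> x s r.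
  apply: (@reverse_doubling _ (V dist mu x) (diam dist) b 24 q) => //.
  + by move=> r1 r2; apply: le_V.
  + move=> r1; exact: (V_reverse_doubling mu metric borel D_gt0 doubling).
Qed.
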